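(* Let $0<r<\infty$, $N\in\mathbb N$, and for each of the seven types $R_N=A_N,B_N,B_N^\vee,C_N,C_N^\vee,BC_N,D_N$ consider the determinantal point process whose correlation kernel at time $t\in(0,t_\ast)$ is $K_t^{R_N}(x,y;t_\ast,r)=\sum_{n=1}^N \frac{1}{m^{R_N}_n(t_\ast)}M^{R_N}_n(x,t)\overline{M^{R_N}_n(y,t_\ast-t)}$ (on $[0,2\pi r)$ for $A_N$, on $[0,\pi r]$ otherwise). Put $t=t_\ast/2$. In the limit $t_\ast\to\infty$, these seven determinantal point processes degenerate into four types of determinantal point processes, with correlation kernels $K^{A_N}(x,y;r)=\frac{1}{2\pi r}\frac{\sin\{N(x-y)/2r\}}{\sin\{(x-y)/2r\}}$, $x,y\in[0,2\pi r)$ (limit for $A_N$); $K^{B_N}(x,y;r)=\frac{1}{2\pi r}\Big[\frac{\sin\{N(x-y)/r\}}{\sin\{(x-y)/2r\}}-\frac{\sin\{N(x+y)/r\}}{\sin\{(x+y)/2r\}}\Big]$, $x,y\in[0,\pi r]$ (common limit for $B_N$, $BC_N$, $C_N^\vee$); $K^{C_N}(x,y;r)=\frac{1}{2\pi r}\Big[\frac{\sin\{(2N+1)(x-y)/2r\}}{\sin\{(x-y)/2r\}}-\frac{\sin\{(2N+1)(x+y)/2r\}}{\sin\{(x+y)/2r\}}\Big]$, $x,y\in[0,\pi r]$ (common limit for $C_N$, $B_N^\vee$); $K^{D_N}(x,y;r)=\frac{1}{2\pi r}\Big[\frac{\sin\{(2N-1)(x-y)/2r\}}{\sin\{(x-y)/2r\}}+\frac{\sin\{(2N-1)(x+y)/2r\}}{\sin\{(x+y)/2r\}}\Big]$,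 $x,y\in[0,\pi r]$ (limit for $D_N$).
   Context: Jacobi theta functions: $\vartheta_1(v;\tau)=2\sum_{n\ge1}(-1)^{n-1}e^{\tau\pi i(n-1/2)^2}\sin\{(2n-1)\pi v\}$, $\vartheta_2(v;\tau)=2\sum_{n\ge1}e^{\tau\pi i(n-1/2)^2}\cos\{(2n-1)\pi v\}$, $\Im\tau>0$. Set $\xi(x)=x/(2\pi r)$, $\tau(t)=it/(2\pi r^2)$. Let $J^{R_N}(j)=j-1/2$ for $A_N,C_N^\vee$; $j-1$ for $B_N,B_N^\vee,D_N$; $j$ for $C_N,BC_N$. Let $\mathcal N^{R_N}=N$ ($A_N$), $2N-1$ ($B_N$), $2N$ ($B_N^\vee,C_N^\vee$), $2(N+1)$ ($C_N$), $2N+1$ ($BC_N$), $2(N-1)$ ($D_N$). Writing $J=J^{R_N}(j)$, $\mathcal N=\mathcal N^{R_N}$: $M^{A_N}_j(x,t)=e^{2\pi iJ\xi(x)}\vartheta_2(\mathcal N\{J\tau(t)+\xi(x)\};\mathcal N^2\tau(t))$; for $B_N,B_N^\vee$: $M_j=e^{2\pi iJ\xi(x)}\vartheta_1(\mathcal N\{J\tau(t)+\xi(x)\};\mathcal N^2\tau(t))-e^{-2\pi iJ\xi(x)}\vartheta_1(\mathcal N\{J\tau(t)-\xi(x)\};\mathcal N^2\tau(t))$; for $C_N,C_N^\vee,BC_N$: same with $\vartheta_2$ in place of $\vartheta_1$; for $D_N$: same with $\vartheta_2$ and a plus sign between the two terms. The constants are $m_j^{R_N}(t_\ast)=2\pi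 r\,\vartheta_2(\mathcal N J\tau(t_\ast);\mathcal N^2\tau(t_\ast))$ for $A_N,C_N,C_N^\vee,BC_N$; for $B_N,B_N^\vee$ the same except $m_1=4\pi r\,\vartheta_2(0;\mathcal N^2\tau(t_\ast))$; for $D_N$ the same except $m_1=4\pi r\,\vartheta_2(0;\mathcal N^2\tau(t_\ast))$ and $m_N=4\pi r\,\vartheta_2(\mathcal N(N-1)\tau(t_\ast);\mathcal N^2\tau(t_\ast))$. The point process has density on the Weyl alcove proportional to $\det_{j,k}[\overline{M_j^{R_N}(x_k,t_\ast-t)}]\det_{j,k}[M_j^{R_N}(x_k,t)]$, and is determinantal with the kernel $K_t^{R_N}$ stated in the claim. *)

From Stdlib Require Import Reals List.
From Coquelicot Require Import Coquelicot.
Import ListNotations.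
Open Scope R_scope.

Definition Cexp (z : C) : C :=
  (exp (Re z) * cos (Im z), exp (Re z) * sin (Im z)).
Definition Ccos (z : C) : C :=
  Cdiv (Cplus (Cexp (Cmult Ci z)) (Cexp (Copp (Cmult Ci z)))) (RtoC 2).
Definition Csin (z : C) : C :=
  Cdiv (Cminus (Cexp (Cmult Ci z)) (Cexp (Copp (Cmult Ci z)))) (Cmult (RtoC 2) Ci).

Definition CSeries (a : nat -> C) : C :=
  (Series (fun k => Re (a k)), Series (fun k => Im (a k))).

Definition Csum1 (N : nat) (f : nat -> C) : C :=
  fold_right Cplus (RtoC 0) (map f (seq 1 N)).

(* ---------- Jacobi theta functions (series index n = k+1 >= 1) ---------- *)
Definition theta1 (v tau : C) : C :=
  Cmult (RtoC 2) (CSeries (fun k =>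
    Cmult (RtoC ((-1) ^ k))
     (Cmult (Cexp (Cmult (Cmult tau (Cmult (RtoC PI) Ci)) (RtoC ((INR k + /2) ^ 2))))
            (Csin (Cmult (RtoC ((2 * INR k + 1) * PI)) v))))).
Definition theta2 (v tau : C) : C :=
  Cmult (RtoC 2) (CSeries (fun k =>
     Cmult (Cexp (Cmult (Cmult tau (Cmult (RtoC PI) Ci)) (RtoC ((INR k + /2) ^ 2))))
           (Ccos (Cmult (RtoC ((2 * INR k + 1) * PI)) v)))).

Inductive RootSys : Set := A_N | B_N | Bv_N | C_N | Cv_N | BC_N | D_N.

Definition xi (r x : R) : R := x / (2 * PI * r).
Definition tau (r t : R) : C := (0, t / (2 * PI * r ^ 2)).

Definition Jidx (RN : RootSys) (j : nat) : R :=
  match RN with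
  | A_N | Cv_N => INR j - /2
  | B_N | Bv_N | D_N => INR j - 1
  | C_N | BC_N => INR j
  end.

Definition calN (RN : RootSys) (N : nat) : R :=
  match RN with
  | A_N => INR N
  | B_N => 2 * INR N - 1
  | Bv_N | Cv_N => 2 * INR N
  | C_N => 2 * (INR N + 1)
  | BC_N => 2 * INR N + 1
  | D_N => 2 * (INR N - 1)
  end.

Definition e2pii (a : R) : C := Cexp (0, 2 * PI * a).

Definition Mfun (RN : RootSys) (N : nat) (r : R) (j : nat) (x t : R) : C :=
  let J := Jidx RN j in
  let cN := calN RN N in
  let ta := tau r t in
  let s := xi r x in
  let tau' := Cmult (RtoC (cN ^ 2)) ta in
  let argp := Cmult (RtoC cN) (Cplus (Cmult (RtoC J) ta) (RtoC s)) in
  let argm := Cmult (RtoC cN) (Cminus (Cmult (RtoC J) ta) (RtoC s)) in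
  match RN with
  | A_N => Cmult (e2pii (J * s)) (theta2 argp tau')
  | B_N | Bv_N =>
      Cminus (Cmult (e2pii (J * s)) (theta1 argp tau'))
             (Cmult (e2pii (- (J * s))) (theta1 argm tau'))
  | C_N | Cv_N | BC_N =>
      Cminus (Cmult (e2pii (J * s)) (theta2 argp tau'))
             (Cmult (e2pii (- (J * s))) (theta2 argm tau'))
  | D_N =>
      Cplus (Cmult (e2pii (J * s)) (theta2 argp tau'))
            (Cmult (e2pii (- (J * s))) (theta2 argm tau'))
  end.

Definition mconst (RN : RootSys) (N : nat) (r : R) (j : nat) (ts : R) : C :=
  let J := Jidx RN j in
  let cN := calN RN N in
  let ta := tau r ts in
  let tau' := Cmult (RtoC (cN ^ 2)) ta in
  let generic := Cmult (RtoC (2 * PI * r)) (theta2 (Cmult (RtoC (cN * J)) ta) tau') in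
  let special1 := Cmult (RtoC (4 * PI * r)) (theta2 (RtoC 0) tau') in
  match RN with
  | A_N | C_N | Cv_N | BC_N => generic
  | B_N | Bv_N => if Nat.eqb j 1 then special1 else generic
  | D_N =>
      if Nat.eqb j 1 then special1
      else if Nat.eqb j N then
        Cmult (RtoC (4 * PI * r))
              (theta2 (Cmult (RtoC (cN * (INR N - 1))) ta) tau')
      else generic
  end.

Definition Kt (RN : RootSys) (N : nat) (r ts t x y : R) : C :=
  Csum1 N (fun n =>
    Cmult (Cinv (mconst RN N r n ts))
          (Cmult (Mfun RN N r n x t) (Cconj (Mfun RN N r n y (ts - t))))).

(* sin(m th)/sin(th), extended by continuity at the zeros of sin th
   (where the value is m cos(m th)/cos(th)). *)
Definition sinratio (m th : R) : R :=
  if Req_EM_T (sin th) 0 then m * cos (m * th) / cos th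
  else sin (m * th) / sin th.

Definition KA (N : nat) (r x y : R) : R :=
  / (2 * PI * r) * sinratio (INR N) ((x - y) / (2 * r)).
Definition KB (N : nat) (r x y : R) : R :=
  / (2 * PI * r) * (sinratio (2 * INR N) ((x - y) / (2 * r))
                   - sinratio (2 * INR N) ((x + y) / (2 * r))).
Definition KC (N : nat) (r x y : R) : R :=
  / (2 * PI * r) * (sinratio (2 * INR N + 1) ((x - y) / (2 * r))
                   - sinratio (2 * INR N + 1) ((x + y) / (2 * r))).
Definition KD (N : nat) (r x y : R) : R :=
  / (2 * PI * r) * (sinratio (2 * INR N - 1) ((x - y) / (2 * r))
                   + sinratio (2 * INR N - 1) ((x + y) / (2 * r))).

Definition Klimit (RN : RootSys) (N : nat) (r x y : R) : R :=
  match RN with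
  | A_N => KA N r x y
  | B_N | BC_N | Cv_N => KB N r x y
  | C_N | Bv_N => KC N r x y
  | D_N => KD N r x y
  end.

Definition in_dom (RN : RootSys) (r x : R) : Prop :=
  match RN with
  | A_N => 0 <= x < 2 * PI * r
  | _ => 0 <= x <= PI * r
  end.

(* Multiply M_n(., t) by the real factor e_n(t) = exp (t (calN^2/4 - calN J_n) / (2 r^2)) and
   m_n(t_ast) by e_n(t_ast) = e_n(t_ast / 2)^2: at t = t_ast / 2 every term of the kernel is
   unchanged.  After this rescaling the k-th terms of the theta series at tau = i t / (2 pi r^2)
   decay like exp (-c k t), except for k = 0, so as t_ast -> oo each rescaled M_n and m_n tends
   to its explicit k = 0 part.  The limit kernel is then a sum of products of sines or cosines,
   which the product-to-sum formulas turn into Dirichlet kernels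
   sum_j cos ((2 j - n - 1) th) = sin (n th) / sin th, evaluated by telescoping (the removable
   singularities sin th = 0 are computed separately). *)

From Stdlib Require Import Reals Lra Lia List.
From Coquelicot Require Import Coquelicot.
Open Scope R_scope.

Lemma is_lim_mult_pinfty f g (a b : R) : is_lim f p_infty a -> is_lim g p_infty b ->
  is_lim (fun t => f t * g t) p_infty (a * b).
Proof. intros Hf Hg; exact (is_lim_mult f g p_infty a b Hf Hg I). Qed.

Lemma is_lim_sqr_pinfty f (a : R) : is_lim f p_infty a -> is_lim (fun t => f t ^ 2) p_infty (a ^ 2).
Proof.
  intros Hf; apply (is_lim_ext (fun t => f t * f t)); [intros; ring |].
  replace (a ^ 2) with (a * a) by ring; apply is_lim_mult_pinfty; assumption.
Qed.

Definition is_Clim (f : R -> C) (z : C) :=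
  filterlim f (Rbar_locally p_infty) (locally z).

Lemma is_Clim_ext f g z : (forall t, f t = g t) -> is_Clim f z -> is_Clim g z.
Proof. exact (filterlim_ext f g). Qed.

Lemma is_Clim_const z : is_Clim (fun _ => z) z.
Proof. apply filterlim_const. Qed.

Lemma is_Clim_pair f g (a b : R) : is_lim f p_infty a -> is_lim g p_infty b ->
  is_Clim (fun t => (f t, g t)) (a, b).
Proof.
  intros Hf Hg; apply filterlim_locally; intros eps.
  apply filterlim_locally with (eps := eps) in Hf.
  apply filterlim_locally with (eps := eps) in Hg.
  exact (filter_and _ _ Hf Hg).
Qed.

Lemma is_Clim_Re f z : is_Clim f z -> is_lim (fun t => Re (f t)) p_infty (Re z).
Proof.
  intros Hf; apply filterlim_locally; intros eps.
  apply filterlim_locally with (eps := eps) in Hf.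
  revert Hf; apply filter_imp; intros t [H _]; exact H.
Qed.

Lemma is_Clim_Im f z : is_Clim f z -> is_lim (fun t => Im (f t)) p_infty (Im z).
Proof.
  intros Hf; apply filterlim_locally; intros eps.
  apply filterlim_locally with (eps := eps) in Hf.
  revert Hf; apply filter_imp; intros t [_ H]; exact H.
Qed.

Lemma is_Clim_plus f g a b : is_Clim f a -> is_Clim g b ->
  is_Clim (fun t => Cplus (f t) (g t)) (Cplus a b).
Proof.
  intros Hf Hg.
  exact (filterlim_comp_2 f g Cplus Hf Hg (@filterlim_plus C_AbsRing C_NormedModule a b)).
Qed.

Lemma is_Clim_mult f g (a b : C) : is_Clim f a -> is_Clim g b ->
  is_Clim (fun t => Cmult (f t) (g t)) (Cmult a b).
Proof.
  intros Hf Hg.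
  pose proof (is_Clim_Re f a Hf); pose proof (is_Clim_Im f a Hf).
  pose proof (is_Clim_Re g b Hg); pose proof (is_Clim_Im g b Hg).
  apply is_Clim_pair; simpl.
  - apply is_lim_minus'; apply is_lim_mult_pinfty; assumption.
  - apply is_lim_plus'; apply is_lim_mult_pinfty; assumption.
Qed.

Lemma is_Clim_scal c f a : is_Clim f a -> is_Clim (fun t => Cmult c (f t)) (Cmult c a).
Proof. intros; apply is_Clim_mult; [apply is_Clim_const | assumption]. Qed.

Lemma is_Clim_opp f a : is_Clim f a -> is_Clim (fun t => Copp (f t)) (Copp a).
Proof.
  intros Hf.
  exact (filterlim_comp _ _ _ f Copp _ _ _ Hf (@filterlim_opp C_AbsRing C_NormedModule a)).
Qed.

Lemma is_Clim_minus f g a b : is_Clim f a -> is_Clim g b ->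
  is_Clim (fun t => Cminus (f t) (g t)) (Cminus a b).
Proof. intros; apply is_Clim_plus; [| apply is_Clim_opp]; assumption. Qed.

Lemma is_Clim_conj f a : is_Clim f a -> is_Clim (fun t => Cconj (f t)) (Cconj a).
Proof.
  intros Hf; apply is_Clim_pair.
  - exact (is_Clim_Re f a Hf).
  - exact (is_lim_opp _ _ _ (is_Clim_Im f a Hf)).
Qed.

Lemma is_Clim_inv f (a : C) : is_Clim f a -> a <> RtoC 0 ->
  is_Clim (fun t => Cinv (f t)) (Cinv a).
Proof.
  intros Hf Ha.
  pose proof (is_Clim_Re f a Hf) as Hre; pose proof (is_Clim_Im f a Hf) as Him.
  destruct a as [a b]; simpl in Hre, Him.
  assert (Hn : a ^ 2 + b ^ 2 <> 0).
  { intros E; apply Ha; assert (a = 0) by nra; assert (b = 0) by nra; subst; reflexivity. }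
  assert (Hden : is_lim (fun t => / (Re (f t) ^ 2 + Im (f t) ^ 2)) p_infty (/ (a ^ 2 + b ^ 2))).
  { apply (is_lim_inv _ _ (Finite _)); [| intros E; injection E; exact Hn].
    apply is_lim_plus'; apply is_lim_sqr_pinfty; assumption. }
  apply is_Clim_pair; apply is_lim_mult_pinfty; try assumption.
  exact (is_lim_opp _ _ _ Him).
Qed.

Lemma is_Clim_comp_scale f c z : 0 < c -> is_Clim f z -> is_Clim (fun t => f (t / c)) z.
Proof.
  intros Hc Hf.
  apply (filterlim_comp _ _ _ (fun t => t / c) f) with (G := Rbar_locally p_infty); [| exact Hf].
  intros P [M HM]; exists (M * c); intros t Ht; apply HM.
  apply Rmult_lt_reg_r with c; [exact Hc |].
  unfold Rdiv; rewrite Rmult_assoc, Rinv_l; lra.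
Qed.

Lemma is_lim_exp_lin d : 0 < d -> is_lim (fun u => exp (-(u * d))) p_infty 0.
Proof.
  intros Hd.
  apply (is_lim_ext (fun u => exp ((- d) * u + 0))); [intros; f_equal; ring |].
  apply is_lim_comp_lin; [| lra].
  replace (Rbar_plus (Rbar_mult (- d) p_infty) 0) with m_infty; [apply is_lim_exp_m |].
  simpl; case Rle_dec; intros H; [exfalso; lra | reflexivity].
Qed.

Lemma exp_mul_INR n x : exp (INR n * x) = exp x ^ n.
Proof.
  induction n as [| n IH]; [simpl; rewrite Rmult_0_l, exp_0; reflexivity |].
  rewrite S_INR, Rmult_plus_distr_r, Rmult_1_l, exp_plus, IH; simpl; ring.
Qed.

Lemma exp_le_compat x x' : x <= x' -> exp x <= exp x'.
Proof. intros [H | ->]; [left; apply exp_increasing; exact H | right; reflexivity]. Qed.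

Section ExpWeightedSeries.

Variable d : R.
Hypothesis d_pos : 0 < d.

Lemma exp_weight_bound (A y : nat -> R) u k n : (forall k, Rabs (y k) <= 1) ->
  0 < u -> d * INR n <= A k -> Rabs (exp (-(u * A k)) * y k) <= exp (-(u * d)) ^ n.
Proof.
  intros Hy Hu HA.
  rewrite Rabs_mult, (Rabs_pos_eq (exp _)) by (left; apply exp_pos).
  rewrite <- exp_mul_INR.
  apply Rle_trans with (exp (- (u * A k)) * 1).
  - apply Rmult_le_compat_l; [left; apply exp_pos | apply Hy].
  - rewrite Rmult_1_r. apply exp_le_compat. nra.
Qed.

Lemma ratio_exp_lt_1 u : 0 < u -> 0 <= exp (-(u * d)) < 1.
Proof.
  intros Hu; split; [left; apply exp_pos |].
  rewrite <- exp_0; apply exp_increasing; nra.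
Qed.

Lemma ex_series_exp_weight (A y : nat -> R) u : (forall k, Rabs (y k) <= 1) -> 0 < u ->
  (forall k, d * INR k <= A k) ->
  ex_series (fun k => exp (-(u * A k)) * y k).
Proof.
  intros Hy Hu HA.
  apply (@ex_series_le R_AbsRing R_CompleteNormedModule _ (fun k => exp (-(u * d)) ^ k)).
  - intros k; apply (exp_weight_bound A y u k k Hy Hu (HA k)).
  - apply ex_series_geom. pose proof (ratio_exp_lt_1 u Hu). rewrite Rabs_pos_eq; lra.
Qed.

Lemma series_exp_weight_bound (A y : nat -> R) u : (forall k, Rabs (y k) <= 1) -> 0 < u ->
  (forall k, d * (INR k + 1) <= A k) ->
  Rabs (Series (fun k => exp (-(u * A k)) * y k))
  <= exp (-(u * d)) / (1 - exp (-(u * d))).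
Proof.
  intros Hy Hu HA. pose proof (ratio_exp_lt_1 u Hu) as Hq.
  set (q := exp (-(u * d))) in *.
  assert (Hb : forall k, Rabs (exp (-(u * A k)) * y k) <= q * q ^ k).
  { intros k. change (q * q ^ k) with (q ^ S k).
    apply exp_weight_bound; [exact Hy | exact Hu |]. rewrite S_INR. apply HA. }
  assert (Hgeom : ex_series (fun k => q * q ^ k)).
  { apply (@ex_series_scal_l R_AbsRing R_CompleteNormedModule).
    apply ex_series_geom. rewrite Rabs_pos_eq; lra. }
  eapply Rle_trans; [apply Series_Rabs |].
  { apply (@ex_series_le R_AbsRing R_CompleteNormedModule _ (fun k => q * q ^ k)); [| exact Hgeom].
    intros k; change (Rabs (Rabs (exp (-(u * A k)) * y k)) <= q * q ^ k).
    rewrite Rabs_Rabsolu; apply Hb. }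
  eapply Rle_trans; [apply Series_le; [| exact Hgeom] |].
  - intros k; split; [apply Rabs_pos | apply Hb].
  - rewrite Series_scal_l, Series_geom by (rewrite Rabs_pos_eq; lra). right; reflexivity.
Qed.

Lemma is_lim_series_exp_weight_0 (A y : nat -> R) : (forall k, Rabs (y k) <= 1) ->
  (forall k, d * (INR k + 1) <= A k) ->
  is_lim (fun u => Series (fun k => exp (-(u * A k)) * y k)) p_infty 0.
Proof.
  intros Hy HA.
  set (g u := exp (-(u * d)) / (1 - exp (-(u * d)))).
  assert (Hg : is_lim g p_infty 0).
  { replace (Finite 0) with (Rbar_div 0 (1 - 0)) by (simpl; f_equal; field).
    apply is_lim_div; [apply is_lim_exp_lin; exact d_pos | | simpl; injection; lra | exact I].
    apply (is_lim_minus' _ _ _ 1 0); [apply is_lim_const | apply is_lim_exp_lin; exact d_pos]. }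
  apply (is_lim_le_le_loc (fun u => - g u) g); [| | exact Hg].
  - exists 0; intros u Hu. apply Rabs_le_between, series_exp_weight_bound; assumption.
  - replace (Finite 0) with (Rbar_opp 0) by (simpl; f_equal; ring). apply is_lim_opp, Hg.
Qed.

Lemma is_lim_series_exp_weight_head (A y : nat -> R) : (forall k, Rabs (y k) <= 1) -> A O = 0 ->
  (forall k, d * (INR k + 1) <= A (S k)) ->
  is_lim (fun u => Series (fun k => exp (-(u * A k)) * y k)) p_infty (y O).
Proof.
  intros Hy HA0 HA.
  apply (is_lim_ext_loc (fun u => y O + Series (fun k => exp (-(u * A (S k))) * y (S k)))).
  - exists 0; intros u Hu.
    rewrite (Series_incr_1 (fun k => exp (-(u * A k)) * y k)), HA0, Rmult_0_r, Ropp_0, exp_0;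
      [ring |].
    apply ex_series_exp_weight; [exact Hy | exact Hu |].
    intros [| k]; [rewrite HA0; simpl; lra | rewrite S_INR; apply HA].
  - pose proof (is_lim_plus' _ _ p_infty _ _ (is_lim_const (y O) p_infty)
      (is_lim_series_exp_weight_0 (fun k => A (S k)) (fun k => y (S k)) (fun k => Hy (S k)) HA))
      as Hlim.
    rewrite Rplus_0_r in Hlim; exact Hlim.
Qed.

End ExpWeightedSeries.

Lemma Cexp_pair a b : Cexp (a, b) = (exp a * cos b, exp a * sin b).
Proof. reflexivity. Qed.

Lemma Ccos_pair p q :
  Ccos (p, q) = ((exp (-q) + exp q) / 2 * cos p, (exp (-q) - exp q) / 2 * sin p).
Proof.
  unfold Ccos, Ci.
  replace (Cmult (0, 1) (p, q)) with ((-q, p) : C) by (apply injective_projections; simpl; ring).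
  replace (Copp (-q, p)) with ((q, -p) : C) by (apply injective_projections; simpl; ring).
  rewrite !Cexp_pair, cos_neg, sin_neg.
  apply injective_projections; simpl; field.
Qed.

Lemma Csin_pair p q :
  Csin (p, q) = ((exp (-q) + exp q) / 2 * sin p, - ((exp (-q) - exp q) / 2) * cos p).
Proof.
  unfold Csin, Ci.
  replace (Cmult (0, 1) (p, q)) with ((-q, p) : C) by (apply injective_projections; simpl; ring).
  replace (Copp (-q, p)) with ((q, -p) : C) by (apply injective_projections; simpl; ring).
  rewrite !Cexp_pair, cos_neg, sin_neg.
  apply injective_projections; simpl; field.
Qed.

Lemma Cexp_imag_tau T c :
  Cexp (Cmult (Cmult (0, T) (Cmult (RtoC PI) Ci)) (RtoC c)) = RtoC (exp (-(T * PI * c))).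
Proof.
  replace (Cmult (Cmult (0, T) (Cmult (RtoC PI) Ci)) (RtoC c)) with ((-(T * PI * c), 0) : C)
    by (unfold Ci; apply injective_projections; simpl; ring).
  rewrite Cexp_pair, cos_0, sin_0. apply injective_projections; simpl; ring.
Qed.

Lemma CSeries_scal_R c (a : nat -> C) :
  Cmult (RtoC c) (CSeries a) = CSeries (fun k => Cmult (RtoC c) (a k)).
Proof.
  unfold CSeries; apply injective_projections; simpl;
    rewrite Rmult_0_l, ?Rminus_0_r, ?Rplus_0_r, <- Series_scal_l;
    apply Series_ext; intros k; unfold Re, Im; ring.
Qed.

Lemma CSeries_pair (a : nat -> C) g h : (forall k, a k = (g k, h k)) ->
  CSeries a = (Series g, Series h).
Proof.
  intros H; unfold CSeries; apply injective_projections; simpl;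
    apply Series_ext; intros k; rewrite H; reflexivity.
Qed.

Definition theta_normalizer (r cN J t : R) := exp (t / (2 * r ^ 2) * (cN ^ 2 / 4 - cN * J)).

(* Rescaling by [theta_normalizer] turns the two exponentials of the k-th theta term into
   exp (-u decayA k) and exp (-u decayB k), with u = t / (2 r^2); only decayB 0 and, when J = 0,
   decayA 0 vanish. *)
Definition decayA (cN J : R) (k : nat) := cN ^ 2 * INR k * (INR k + 1) + 2 * (INR k + 1) * cN * J.
Definition decayB (cN J : R) (k : nat) := cN ^ 2 * INR k * (INR k + 1) - 2 * INR k * cN * J.

Lemma theta_normalizer_weights r cN J t k : 0 < r ->
  theta_normalizer r cN J t * exp (-(cN ^ 2 * (t / (2 * PI * r ^ 2)) * PI * (INR k + /2) ^ 2))
    * exp (-((2 * INR k + 1) * PI * (cN * J * (t / (2 * PI * r ^ 2)))))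
    = exp (-(t / (2 * r ^ 2) * decayA cN J k)) /\
  theta_normalizer r cN J t * exp (-(cN ^ 2 * (t / (2 * PI * r ^ 2)) * PI * (INR k + /2) ^ 2))
    * exp ((2 * INR k + 1) * PI * (cN * J * (t / (2 * PI * r ^ 2))))
    = exp (-(t / (2 * r ^ 2) * decayB cN J k)).
Proof.
  intros Hr; pose proof PI_RGT_0.
  unfold theta_normalizer, decayA, decayB; rewrite <- !exp_plus.
  split; f_equal; field; split; lra.
Qed.

Definition two_weight_series s1 s2 cN J (y : nat -> R) u :=
  Series (fun k => s1 * (exp (-(u * decayA cN J k)) * y k)
                 + s2 * (exp (-(u * decayB cN J k)) * y k)).

Definition theta_arg r cN J w t : C := (cN * w, cN * J * (t / (2 * PI * r ^ 2))).
Definition theta_tau r cN t : C := (0, cN ^ 2 * (t / (2 * PI * r ^ 2))).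

Definition theta2_rescaled r cN J w t :=
  Cmult (RtoC (theta_normalizer r cN J t)) (theta2 (theta_arg r cN J w t) (theta_tau r cN t)).
Definition theta1_rescaled r cN J w t :=
  Cmult (RtoC (theta_normalizer r cN J t)) (theta1 (theta_arg r cN J w t) (theta_tau r cN t)).

Definition phase k cN w := (2 * INR k + 1) * PI * (cN * w).

Lemma theta_term_arg r cN J w t k :
  Cmult (RtoC ((2 * INR k + 1) * PI)) (theta_arg r cN J w t)
  = (phase k cN w, (2 * INR k + 1) * PI * (cN * J * (t / (2 * PI * r ^ 2)))).
Proof. unfold theta_arg, phase; apply injective_projections; simpl; ring. Qed.

Lemma theta2_rescaled_series r cN J w t : 0 < r ->
  theta2_rescaled r cN J w t
  = (two_weight_series 1 1 cN J (fun k => cos (phase k cN w)) (t / (2 * r ^ 2)),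
     two_weight_series 1 (-1) cN J (fun k => sin (phase k cN w)) (t / (2 * r ^ 2))).
Proof.
  intros Hr; unfold theta2_rescaled, theta2, theta_tau.
  rewrite Cmult_assoc, <- RtoC_mult, CSeries_scal_R.
  apply CSeries_pair; intros k.
  rewrite Cexp_imag_tau, theta_term_arg, Ccos_pair.
  destruct (theta_normalizer_weights r cN J t k Hr) as [HA HB].
  rewrite <- HA, <- HB.
  apply injective_projections; simpl; field.
Qed.

Lemma theta1_rescaled_series r cN J w t : 0 < r ->
  theta1_rescaled r cN J w t
  = (two_weight_series 1 1 cN J (fun k => (-1) ^ k * sin (phase k cN w)) (t / (2 * r ^ 2)),
     two_weight_series (-1) 1 cN J (fun k => (-1) ^ k * cos (phase k cN w)) (t / (2 * r ^ 2))).
Proof.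
  intros Hr; unfold theta1_rescaled, theta1, theta_tau.
  rewrite Cmult_assoc, <- RtoC_mult, CSeries_scal_R.
  apply CSeries_pair; intros k.
  rewrite Cexp_imag_tau, theta_term_arg, Csin_pair.
  destruct (theta_normalizer_weights r cN J t k Hr) as [HA HB].
  rewrite <- HA, <- HB.
  apply injective_projections; simpl; field.
Qed.

Lemma INR_mul_pred_nonneg k : 0 <= INR k * (INR k - 1).
Proof. destruct k; [simpl; lra | rewrite S_INR; pose proof (pos_INR k); nra]. Qed.

Section DecayRates.

Variables cN J : R.
Hypotheses (J_nonneg : 0 <= J) (J_lt_cN : J < cN).

Lemma decayB_0 : decayB cN J O = 0.
Proof. unfold decayB; simpl; ring. Qed.

Lemma decayB_lower_bound k : 2 * cN * (cN - J) * INR k <= decayB cN J k.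
Proof.
  unfold decayB; pose proof (INR_mul_pred_nonneg k).
  assert (0 <= cN ^ 2 * (INR k * (INR k - 1))) by (apply Rmult_le_pos; nra).
  nra.
Qed.

Lemma decayA_lower_bound k : 2 * cN * (cN - J) * INR k <= decayA cN J k.
Proof.
  unfold decayA; pose proof (INR_mul_pred_nonneg k); pose proof (pos_INR k).
  assert (0 <= cN ^ 2 * (INR k * (INR k - 1))) by (apply Rmult_le_pos; nra).
  assert (0 <= cN * J * (INR k + 1)) by (apply Rmult_le_pos; nra).
  nra.
Qed.

Lemma decayA_lower_bound_pos k : 2 * cN * J * (INR k + 1) <= decayA cN J k.
Proof.
  unfold decayA; pose proof (pos_INR k).
  assert (0 <= cN ^ 2 * (INR k * (INR k + 1))) by (apply Rmult_le_pos; nra).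
  nra.
Qed.

Lemma two_weight_series_split s1 s2 (y : nat -> R) u : (forall k, Rabs (y k) <= 1) -> 0 < u ->
  two_weight_series s1 s2 cN J y u
  = s1 * Series (fun k => exp (-(u * decayA cN J k)) * y k)
    + s2 * Series (fun k => exp (-(u * decayB cN J k)) * y k).
Proof.
  intros Hy Hu; unfold two_weight_series.
  assert (Hd : 0 < 2 * cN * (cN - J)) by nra.
  rewrite Series_plus, !Series_scal_l; [reflexivity | |];
    apply (@ex_series_scal_l R_AbsRing R_CompleteNormedModule);
    apply (ex_series_exp_weight (2 * cN * (cN - J))); auto.
  - apply decayA_lower_bound.
  - apply decayB_lower_bound.
Qed.

Lemma is_lim_series_decayB (y : nat -> R) : (forall k, Rabs (y k) <= 1) ->
  is_lim (fun u => Series (fun k => exp (-(u * decayB cN J k)) * y k)) p_infty (y O).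
Proof.
  intros Hy; apply (is_lim_series_exp_weight_head (2 * cN * (cN - J))); auto.
  - nra.
  - apply decayB_0.
  - intros k; rewrite <- S_INR; apply decayB_lower_bound.
Qed.

Lemma is_lim_two_weight_series_pos s1 s2 (y : nat -> R) : 0 < J ->
  (forall k, Rabs (y k) <= 1) ->
  is_lim (two_weight_series s1 s2 cN J y) p_infty (s2 * y O).
Proof.
  intros HJ Hy.
  apply (is_lim_ext_loc (fun u => s1 * Series (fun k => exp (-(u * decayA cN J k)) * y k)
                                + s2 * Series (fun k => exp (-(u * decayB cN J k)) * y k))).
  { exists 0; intros u Hu; symmetry; apply two_weight_series_split; assumption. }
  replace (s2 * y O) with (s1 * 0 + s2 * y O) by ring.
  apply is_lim_plus'; [apply (is_lim_scal_l _ _ _ 0) | apply (is_lim_scal_l _ _ _ (y O))].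
  - apply (is_lim_series_exp_weight_0 (2 * cN * J));
      [nra | exact Hy | apply decayA_lower_bound_pos].
  - apply is_lim_series_decayB, Hy.
Qed.

Lemma is_lim_two_weight_series_0 s1 s2 (y : nat -> R) : J = 0 ->
  (forall k, Rabs (y k) <= 1) ->
  is_lim (two_weight_series s1 s2 cN J y) p_infty ((s1 + s2) * y O).
Proof.
  intros HJ Hy.
  apply (is_lim_ext_loc (fun u => s1 * Series (fun k => exp (-(u * decayA cN J k)) * y k)
                                + s2 * Series (fun k => exp (-(u * decayB cN J k)) * y k))).
  { exists 0; intros u Hu; symmetry; apply two_weight_series_split; assumption. }
  replace ((s1 + s2) * y O) with (s1 * y O + s2 * y O) by ring.
  apply is_lim_plus'; apply (is_lim_scal_l _ _ _ (y O)); [| apply is_lim_series_decayB, Hy].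
  apply (is_lim_series_exp_weight_head (2 * cN * (cN - J))); [nra | exact Hy | |].
  - unfold decayA; rewrite HJ; simpl; ring.
  - intros k; rewrite <- S_INR; apply decayA_lower_bound.
Qed.

End DecayRates.

Lemma phase_0 cN w : phase O cN w = PI * cN * w.
Proof. unfold phase; simpl; ring. Qed.

Lemma Rabs_cos_le_1 x : Rabs (cos x) <= 1.
Proof. apply Rabs_le, COS_bound. Qed.
Lemma Rabs_sin_le_1 x : Rabs (sin x) <= 1.
Proof. apply Rabs_le, SIN_bound. Qed.
Lemma Rabs_sign_mul_le_1 (k : nat) x : Rabs x <= 1 -> Rabs ((-1) ^ k * x) <= 1.
Proof. intros; rewrite Rabs_mult, pow_1_abs; lra. Qed.

Section RescaledThetaLimits.

Variables r cN J w : R.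
Hypotheses (r_pos : 0 < r) (J_nonneg : 0 <= J) (J_lt_cN : J < cN).

Let theta2_series u :=
  (two_weight_series 1 1 cN J (fun k => cos (phase k cN w)) u,
   two_weight_series 1 (-1) cN J (fun k => sin (phase k cN w)) u).
Let theta1_series u :=
  (two_weight_series 1 1 cN J (fun k => (-1) ^ k * sin (phase k cN w)) u,
   two_weight_series (-1) 1 cN J (fun k => (-1) ^ k * cos (phase k cN w)) u).

Let is_Clim_rescale (g : R -> C) z : is_Clim g z -> is_Clim (fun t => g (t / (2 * r ^ 2))) z.
Proof. apply is_Clim_comp_scale; apply Rmult_lt_0_compat; [lra | apply pow_lt, r_pos]. Qed.

Lemma is_Clim_theta2_rescaled_pos : 0 < J ->
  is_Clim (theta2_rescaled r cN J w) (cos (PI * cN * w), - sin (PI * cN * w)).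
Proof.
  intros HJ; apply (is_Clim_ext (fun t => theta2_series (t / (2 * r ^ 2))));
    [intros t; symmetry; apply theta2_rescaled_series, r_pos |].
  apply is_Clim_rescale; rewrite <- phase_0; apply is_Clim_pair.
  - rewrite <- (Rmult_1_l (cos _)).
    apply is_lim_two_weight_series_pos; auto using Rabs_cos_le_1.
  - replace (- _) with (-1 * sin (phase O cN w)) by ring.
    apply is_lim_two_weight_series_pos; auto using Rabs_sin_le_1.
Qed.

Lemma is_Clim_theta2_rescaled_0 : J = 0 ->
  is_Clim (theta2_rescaled r cN J w) (2 * cos (PI * cN * w), 0).
Proof.
  intros HJ; apply (is_Clim_ext (fun t => theta2_series (t / (2 * r ^ 2))));
    [intros t; symmetry; apply theta2_rescaled_series, r_pos |].
  apply is_Clim_rescale; rewrite <- phase_0; apply is_Clim_pair.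
  - replace (2 * _) with ((1 + 1) * cos (phase O cN w)) by ring.
    apply is_lim_two_weight_series_0; auto using Rabs_cos_le_1.
  - replace 0 with ((1 + -1) * sin (phase O cN w)) by ring.
    apply is_lim_two_weight_series_0; auto using Rabs_sin_le_1.
Qed.

Lemma is_Clim_theta1_rescaled_pos : 0 < J ->
  is_Clim (theta1_rescaled r cN J w) (sin (PI * cN * w), cos (PI * cN * w)).
Proof.
  intros HJ; apply (is_Clim_ext (fun t => theta1_series (t / (2 * r ^ 2))));
    [intros t; symmetry; apply theta1_rescaled_series, r_pos |].
  apply is_Clim_rescale; rewrite <- phase_0; apply is_Clim_pair.
  - replace (sin _) with (1 * ((-1) ^ O * sin (phase O cN w))) by ring.
    apply is_lim_two_weight_series_pos; auto using Rabs_sign_mul_le_1, Rabs_sin_le_1.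
  - replace (cos _) with (1 * ((-1) ^ O * cos (phase O cN w))) by ring.
    apply is_lim_two_weight_series_pos; auto using Rabs_sign_mul_le_1, Rabs_cos_le_1.
Qed.

Lemma is_Clim_theta1_rescaled_0 : J = 0 ->
  is_Clim (theta1_rescaled r cN J w) (2 * sin (PI * cN * w), 0).
Proof.
  intros HJ; apply (is_Clim_ext (fun t => theta1_series (t / (2 * r ^ 2))));
    [intros t; symmetry; apply theta1_rescaled_series, r_pos |].
  apply is_Clim_rescale; rewrite <- phase_0; apply is_Clim_pair.
  - replace (2 * _) with ((1 + 1) * ((-1) ^ O * sin (phase O cN w))) by ring.
    apply is_lim_two_weight_series_0; auto using Rabs_sign_mul_le_1, Rabs_sin_le_1.
  - replace 0 with ((-1 + 1) * ((-1) ^ O * cos (phase O cN w))) by ring.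
    apply is_lim_two_weight_series_0; auto using Rabs_sign_mul_le_1, Rabs_cos_le_1.
Qed.

End RescaledThetaLimits.

(* The k = 0 theta term, which carries both exponentials in the limit exactly when J = 0. *)
Definition theta2_lead (cN J w : R) : C :=
  if Req_EM_T J 0 then (2 * cos (PI * cN * w), 0) else (cos (PI * cN * w), - sin (PI * cN * w)).
Definition theta1_lead (cN J w : R) : C :=
  if Req_EM_T J 0 then (2 * sin (PI * cN * w), 0) else (sin (PI * cN * w), cos (PI * cN * w)).

Lemma is_Clim_theta2_rescaled r cN J w : 0 < r -> 0 <= J -> J < cN ->
  is_Clim (theta2_rescaled r cN J w) (theta2_lead cN J w).
Proof.
  intros Hr HJ0 HJc; unfold theta2_lead; destruct (Req_EM_T J 0) as [HJ | HJ].
  - exact (is_Clim_theta2_rescaled_0 r cN J w Hr HJ0 HJc HJ).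
  - exact (is_Clim_theta2_rescaled_pos r cN J w Hr HJ0 HJc ltac:(lra)).
Qed.

Lemma is_Clim_theta1_rescaled r cN J w : 0 < r -> 0 <= J -> J < cN ->
  is_Clim (theta1_rescaled r cN J w) (theta1_lead cN J w).
Proof.
  intros Hr HJ0 HJc; unfold theta1_lead; destruct (Req_EM_T J 0) as [HJ | HJ].
  - exact (is_Clim_theta1_rescaled_0 r cN J w Hr HJ0 HJc HJ).
  - exact (is_Clim_theta1_rescaled_pos r cN J w Hr HJ0 HJc ltac:(lra)).
Qed.

Definition theta_rescaled (RN : RootSys) :=
  match RN with B_N | Bv_N => theta1_rescaled | _ => theta2_rescaled end.
Definition theta_lead (RN : RootSys) :=
  match RN with B_N | Bv_N => theta1_lead | _ => theta2_lead end.

Lemma is_Clim_theta_rescaled RN r cN J w : 0 < r -> 0 <= J -> J < cN ->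
  is_Clim (theta_rescaled RN r cN J w) (theta_lead RN cN J w).
Proof.
  intros Hr HJ0 HJc; destruct RN;
    first [ exact (is_Clim_theta1_rescaled r cN J w Hr HJ0 HJc)
          | exact (is_Clim_theta2_rescaled r cN J w Hr HJ0 HJc) ].
Qed.

Definition combine (RN : RootSys) (e1 a e2 b : C) : C :=
  match RN with
  | A_N => Cmult e1 a
  | D_N => Cplus (Cmult e1 a) (Cmult e2 b)
  | _ => Cminus (Cmult e1 a) (Cmult e2 b)
  end.

Lemma is_Clim_combine RN e1 e2 f g a b : is_Clim f a -> is_Clim g b ->
  is_Clim (fun t => combine RN e1 (f t) e2 (g t)) (combine RN e1 a e2 b).
Proof.
  intros Hf Hg; destruct RN; unfold combine.
  1: exact (is_Clim_scal e1 f a Hf).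
  1-5: exact (is_Clim_minus _ _ _ _ (is_Clim_scal e1 f a Hf) (is_Clim_scal e2 g b Hg)).
  exact (is_Clim_plus _ _ _ _ (is_Clim_scal e1 f a Hf) (is_Clim_scal e2 g b Hg)).
Qed.

Lemma Mfun_rescaled RN N r j x t :
  let cN := calN RN N in let J := Jidx RN j in let s := xi r x in
  Cmult (RtoC (theta_normalizer r cN J t)) (Mfun RN N r j x t)
  = combine RN (e2pii (J * s)) (theta_rescaled RN r cN J s t)
               (e2pii (- (J * s))) (theta_rescaled RN r cN J (- s) t).
Proof.
  assert (Harg : forall cN J s t, Cmult (RtoC cN) (Cplus (Cmult (RtoC J) (tau r t)) (RtoC s))
                                 = theta_arg r cN J s t)
    by (intros; unfold tau, theta_arg; apply injective_projections; simpl; ring).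
  assert (Harg' : forall cN J s t, Cmult (RtoC cN) (Cminus (Cmult (RtoC J) (tau r t)) (RtoC s))
                                  = theta_arg r cN J (- s) t)
    by (intros; unfold tau, theta_arg; apply injective_projections; simpl; ring).
  assert (Htau : forall cN t, Cmult (RtoC (cN ^ 2)) (tau r t) = theta_tau r cN t)
    by (intros; unfold tau, theta_tau; apply injective_projections; simpl; ring).
  destruct RN; unfold Mfun, combine, theta_rescaled, theta1_rescaled, theta2_rescaled;
    cbv beta iota zeta; rewrite ?Harg, ?Harg', ?Htau; ring.
Qed.

Definition mcoef (RN : RootSys) (N j : nat) (r : R) : R :=
  match RN with
  | B_N | Bv_N => if Nat.eqb j 1 then 4 * PI * r else 2 * PI * r
  | D_N => if Nat.eqb j 1 then 4 * PI * r else if Nat.eqb j N then 4 * PI * r else 2 * PI * r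
  | _ => 2 * PI * r
  end.

Lemma mcoef_pos RN N j r : 0 < r -> 0 < mcoef RN N j r.
Proof.
  intros Hr; pose proof PI_RGT_0.
  destruct RN; unfold mcoef;
    repeat match goal with |- context [Nat.eqb ?a ?b] => destruct (Nat.eqb a b) end; nra.
Qed.

Lemma mconst_rescaled RN N r j t :
  let cN := calN RN N in let J := Jidx RN j in
  Cmult (RtoC (theta_normalizer r cN J t)) (mconst RN N r j t)
  = Cmult (RtoC (mcoef RN N j r)) (theta2_rescaled r cN J 0 t).
Proof.
  assert (Harg : forall cN J, Cmult (RtoC (cN * J)) (tau r t) = theta_arg r cN J 0 t)
    by (intros; unfold tau, theta_arg; apply injective_projections; simpl; ring).
  assert (Hzero : forall RN', Jidx RN' 1 = 0 -> RtoC 0 = theta_arg r (calN RN' N) (Jidx RN' 1) 0 t)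
    by (intros RN' ->; unfold theta_arg; apply injective_projections; simpl; ring).
  assert (Htau : forall cN, Cmult (RtoC (cN ^ 2)) (tau r t) = theta_tau r cN t)
    by (intros; unfold tau, theta_tau; apply injective_projections; simpl; ring).
  destruct RN; unfold mconst, mcoef, theta2_rescaled; cbv beta iota zeta; rewrite ?Htau.
  1, 4, 5, 6: rewrite Harg; ring.
  1, 2: destruct (Nat.eqb j 1) eqn:E; [apply Nat.eqb_eq in E; subst j | rewrite Harg; ring].
  1: rewrite (Hzero B_N) by (simpl; ring); ring.
  1: rewrite (Hzero Bv_N) by (simpl; ring); ring.
  destruct (Nat.eqb j 1) eqn:E1; [apply Nat.eqb_eq in E1; subst j |].
  - rewrite (Hzero D_N) by (simpl; ring); ring.
  - destruct (Nat.eqb j N) eqn:EN;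
      [apply Nat.eqb_eq in EN; subst j; change (Jidx D_N N) with (INR N - 1) |];
      rewrite Harg; ring.
Qed.

Definition admissible (RN : RootSys) (N : nat) := (1 <= N)%nat /\ (RN = D_N -> (2 <= N)%nat).

Lemma Jidx_nonneg RN j : (1 <= j)%nat -> 0 <= Jidx RN j.
Proof.
  intros Hj; assert (1 <= INR j) by (apply (le_INR 1); lia).
  destruct RN; simpl; lra.
Qed.

Lemma Jidx_lt_calN RN N j : admissible RN N -> (j <= N)%nat -> Jidx RN j < calN RN N.
Proof.
  intros [HN HD] Hj.
  assert (INR j <= INR N) by (apply le_INR; lia).
  assert (1 <= INR N) by (apply (le_INR 1); lia).
  destruct RN; simpl; try lra.
  assert (2 <= INR N) by (apply (le_INR 2), HD; reflexivity). lra.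
Qed.

Definition M_lead RN N r j x : C :=
  let cN := calN RN N in let J := Jidx RN j in let s := xi r x in
  combine RN (e2pii (J * s)) (theta_lead RN cN J s) (e2pii (- (J * s))) (theta_lead RN cN J (- s)).

Definition m_lead RN N r j : C :=
  Cmult (RtoC (mcoef RN N j r)) (theta2_lead (calN RN N) (Jidx RN j) 0).

Lemma is_Clim_Mfun_rescaled RN N r j x : 0 < r -> admissible RN N -> (1 <= j <= N)%nat ->
  is_Clim (fun t => Cmult (RtoC (theta_normalizer r (calN RN N) (Jidx RN j) t)) (Mfun RN N r j x t))
          (M_lead RN N r j x).
Proof.
  intros Hr Hadm Hj.
  pose proof (Jidx_nonneg RN j ltac:(lia)); pose proof (Jidx_lt_calN RN N j Hadm ltac:(lia)).
  eapply is_Clim_ext; [intros t; symmetry; apply Mfun_rescaled |].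
  apply is_Clim_combine; apply is_Clim_theta_rescaled; assumption.
Qed.

Lemma is_Clim_mconst_rescaled RN N r j : 0 < r -> admissible RN N -> (1 <= j <= N)%nat ->
  is_Clim (fun t => Cmult (RtoC (theta_normalizer r (calN RN N) (Jidx RN j) t)) (mconst RN N r j t))
          (m_lead RN N r j).
Proof.
  intros Hr Hadm Hj.
  pose proof (Jidx_nonneg RN j ltac:(lia)); pose proof (Jidx_lt_calN RN N j Hadm ltac:(lia)).
  eapply is_Clim_ext; [intros t; symmetry; apply mconst_rescaled |].
  apply is_Clim_scal, is_Clim_theta2_rescaled; assumption.
Qed.

Lemma m_lead_neq_0 RN N r j : 0 < r -> m_lead RN N r j <> RtoC 0.
Proof.
  intros Hr H; apply (f_equal fst) in H.
  pose proof (mcoef_pos RN N j r Hr).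
  unfold m_lead, theta2_lead in H; destruct Req_EM_T; simpl in H;
    rewrite Rmult_0_r, cos_0, ?sin_0 in H; nra.
Qed.

Lemma Cinv_mult_conj_rescale (m a b : C) (e : R) : e <> 0 ->
  Cmult (Cinv m) (Cmult a (Cconj b)) =
  Cmult (Cinv (Cmult (RtoC (e * e)) m)) (Cmult (Cmult (RtoC e) a) (Cconj (Cmult (RtoC e) b))).
Proof.
  intros He; destruct m as [m1 m2], a as [a1 a2], b as [b1 b2].
  destruct (Req_dec (m1 ^ 2 + m2 ^ 2) 0) as [H0 | H0].
  - (* [Cinv 0 = 0] on both sides *)
    assert (m1 = 0) by nra; assert (m2 = 0) by nra; subst.
    unfold Cinv, Cmult, Cconj; apply injective_projections; simpl; unfold Rdiv; ring.
  - assert (m1 * m1 + m2 * m2 <> 0) by (intro E; apply H0; rewrite <- E; ring).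
    assert (e * e * m1 * (e * e * m1) + e * e * m2 * (e * e * m2) <> 0).
    { replace (e * e * m1 * (e * e * m1) + e * e * m2 * (e * e * m2))
        with ((e * e) * (e * e) * (m1 * m1 + m2 * m2)) by ring.
      apply Rmult_integral_contrapositive; split; [| assumption].
      apply Rmult_integral_contrapositive; split; apply Rmult_integral_contrapositive; tauto. }
    unfold Cinv, Cmult, Cconj; apply injective_projections; simpl; field; tauto.
Qed.

Lemma theta_normalizer_half r cN J t : 0 < r ->
  theta_normalizer r cN J t = theta_normalizer r cN J (t / 2) * theta_normalizer r cN J (t / 2).
Proof. intros Hr; unfold theta_normalizer; rewrite <- exp_plus; f_equal; field; lra. Qed.

Lemma is_Clim_Csum1 N (F : nat -> R -> C) (L : nat -> C) :
  (forall n, (1 <= n <= N)%nat -> is_Clim (F n) (L n)) ->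
  is_Clim (fun t => Csum1 N (fun n => F n t)) (Csum1 N L).
Proof.
  intros H; unfold Csum1.
  assert (Hin : forall n, In n (seq 1 N) -> is_Clim (F n) (L n))
    by (intros n Hn; apply in_seq in Hn; apply H; lia).
  induction (seq 1 N) as [| n l IH]; simpl; [apply is_Clim_const |].
  apply is_Clim_plus; [apply Hin; left; reflexivity |].
  apply IH; intros; apply Hin; right; assumption.
Qed.

Definition kernel_lead RN N r x y n : C :=
  Cmult (Cinv (m_lead RN N r n)) (Cmult (M_lead RN N r n x) (Cconj (M_lead RN N r n y))).

Lemma is_Clim_Kt_half RN N r x y : 0 < r -> admissible RN N ->
  is_Clim (fun ts => Kt RN N r ts (ts / 2) x y) (Csum1 N (kernel_lead RN N r x y)).
Proof.
  intros Hr Hadm.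
  set (nrm n t := theta_normalizer r (calN RN N) (Jidx RN n) t).
  apply (is_Clim_ext (fun ts => Csum1 N (fun n =>
    Cmult (Cinv (Cmult (RtoC (nrm n ts)) (mconst RN N r n ts)))
          (Cmult (Cmult (RtoC (nrm n (ts / 2))) (Mfun RN N r n x (ts / 2)))
                 (Cconj (Cmult (RtoC (nrm n (ts / 2))) (Mfun RN N r n y (ts / 2)))))))).
  { intros ts; unfold Kt, Csum1; f_equal; apply map_ext; intros n.
    replace (ts - ts / 2) with (ts / 2) by field.
    unfold nrm; rewrite (theta_normalizer_half r _ _ ts Hr).
    symmetry; apply Cinv_mult_conj_rescale.
    apply Rgt_not_eq, exp_pos. }
  apply is_Clim_Csum1; intros n Hn; unfold kernel_lead.
  apply is_Clim_mult; [apply is_Clim_inv; [| apply m_lead_neq_0, Hr] | apply is_Clim_mult].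
  - apply is_Clim_mconst_rescaled; assumption.
  - apply (is_Clim_comp_scale (fun t => Cmult (RtoC (nrm n t)) (Mfun RN N r n x t))); [lra |].
    apply is_Clim_Mfun_rescaled; assumption.
  - apply is_Clim_conj.
    apply (is_Clim_comp_scale (fun t => Cmult (RtoC (nrm n t)) (Mfun RN N r n y t))); [lra |].
    apply is_Clim_Mfun_rescaled; assumption.
Qed.

Definition rsum (f : nat -> R) (M : nat) : R := fold_right Rplus 0 (map f (seq 1 M)).

Lemma rsum_S f M : rsum f (S M) = rsum f M + f (S M).
Proof.
  unfold rsum; rewrite seq_S, map_app, fold_right_app; simpl.
  replace (1 + M)%nat with (S M) by lia.
  induction (map f (seq 1 M)) as [| a l IH]; simpl; [| rewrite IH]; ring.
Qed.

Lemma rsum_ext f g M : (forall j, (1 <= j <= M)%nat -> f j = g j) -> rsum f M = rsum g M.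
Proof.
  induction M as [| M IH]; intros H; [reflexivity |].
  rewrite !rsum_S, IH, H; [reflexivity | lia | intros; apply H; lia].
Qed.

Lemma rsum_const c M : rsum (fun _ => c) M = INR M * c.
Proof. induction M as [| M IH]; [unfold rsum; simpl; ring | rewrite rsum_S, IH, S_INR; ring]. Qed.

Lemma rsum_scal c f M : rsum (fun j => c * f j) M = c * rsum f M.
Proof. induction M as [| M IH]; [unfold rsum; simpl; ring | rewrite !rsum_S, IH; ring]. Qed.

Lemma rsum_plus f g M : rsum (fun j => f j + g j) M = rsum f M + rsum g M.
Proof. induction M as [| M IH]; [unfold rsum; simpl; ring | rewrite !rsum_S, IH; ring]. Qed.

Lemma rsum_minus f g M : rsum (fun j => f j - g j) M = rsum f M - rsum g M.
Proof. induction M as [| M IH]; [unfold rsum; simpl; ring | rewrite !rsum_S, IH; ring]. Qed.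

Lemma rsum_telescope (G : nat -> R) M : rsum (fun j => G j - G (j - 1)%nat) M = G M - G O.
Proof.
  induction M as [| M IH]; [unfold rsum; simpl; ring |].
  rewrite rsum_S, IH; replace (S M - 1)%nat with M by lia; ring.
Qed.

Lemma INR_pred j : (1 <= j)%nat -> INR (j - 1) = INR j - 1.
Proof. intros; rewrite minus_INR by lia; simpl; ring. Qed.

Lemma rsum_cos_arith c th M :
  rsum (fun j => 2 * cos ((2 * INR j + c) * th)) M * sin th
  = sin ((2 * INR M + c + 1) * th) - sin ((c + 1) * th).
Proof.
  rewrite Rmult_comm, <- rsum_scal.
  rewrite (rsum_ext _ (fun j => sin ((2 * INR j + c + 1) * th)
                                - sin ((2 * INR (j - 1) + c + 1) * th))).
  - rewrite rsum_telescope; simpl; f_equal; f_equal; ring.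
  - intros j Hj; rewrite INR_pred by lia.
    replace ((2 * INR j + c + 1) * th) with ((2 * INR j + c) * th + th) by ring.
    replace ((2 * (INR j - 1) + c + 1) * th) with ((2 * INR j + c) * th - th) by ring.
    rewrite sin_plus, sin_minus; ring.
Qed.

Lemma rsum_sin_arith c th M :
  rsum (fun j => 2 * sin ((2 * INR j + c) * th)) M * sin th
  = cos ((c + 1) * th) - cos ((2 * INR M + c + 1) * th).
Proof.
  rewrite Rmult_comm, <- rsum_scal.
  rewrite (rsum_ext _ (fun j => - cos ((2 * INR j + c + 1) * th)
                                - - cos ((2 * INR (j - 1) + c + 1) * th))).
  - rewrite rsum_telescope; simpl; replace ((2 * 0 + c + 1) * th) with ((c + 1) * th) by ring; ring.
  - intros j Hj; rewrite INR_pred by lia.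
    replace ((2 * INR j + c + 1) * th) with ((2 * INR j + c) * th + th) by ring.
    replace ((2 * (INR j - 1) + c + 1) * th) with ((2 * INR j + c) * th - th) by ring.
    rewrite cos_plus, cos_minus; ring.
Qed.

Lemma sinratio_sin_neq_0 m th : sin th <> 0 -> sinratio m th = sin (m * th) / sin th.
Proof. intros H; unfold sinratio; destruct Req_EM_T; [contradiction | reflexivity]. Qed.

Lemma sinratio_sin_0 m th : sin th = 0 -> sinratio m th = m * cos (m * th) / cos th.
Proof. intros H; unfold sinratio; destruct Req_EM_T; [reflexivity | contradiction]. Qed.

Section SinZero.

Variable th : R.
Hypothesis sin_th_0 : sin th = 0.

Lemma cos_sqr_sin_0 : cos th ^ 2 = 1.
Proof. pose proof (sin2_cos2 th) as H; unfold Rsqr in H; rewrite sin_th_0 in H; simpl; lra. Qed.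

Lemma cos_neq_0_sin_0 : cos th <> 0.
Proof. intros E; pose proof cos_sqr_sin_0 as H; rewrite E in H; simpl in H; lra. Qed.

Lemma cos_even_pow_sin_0 k : cos th ^ (2 * k) = 1.
Proof. rewrite pow_mult, cos_sqr_sin_0; apply pow1. Qed.

Lemma cos_pow_even_add_sin_0 k m : cos th ^ (2 * k + m) = cos th ^ m.
Proof. rewrite pow_add, cos_even_pow_sin_0; ring. Qed.

Lemma Rinv_cos_sin_0 : / cos th = cos th.
Proof.
  pose proof cos_neq_0_sin_0; pose proof cos_sqr_sin_0.
  apply Rmult_eq_reg_l with (cos th); [| assumption].
  rewrite Rinv_r by assumption; simpl in *; lra.
Qed.

Lemma cos_sin_INR_sin_0 n : cos (INR n * th) = cos th ^ n /\ sin (INR n * th) = 0.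
Proof.
  induction n as [| n [IHc IHs]]; [simpl; rewrite Rmult_0_l, cos_0, sin_0; auto |].
  rewrite S_INR; replace ((INR n + 1) * th) with (INR n * th + th) by ring.
  rewrite cos_plus, sin_plus, IHc, IHs, sin_th_0; simpl; split; ring.
Qed.

Lemma cos_sin_INR_diff_sin_0 a b :
  cos ((INR a - INR b) * th) = cos th ^ (a + b) /\ sin ((INR a - INR b) * th) = 0.
Proof.
  destruct (cos_sin_INR_sin_0 a) as [Ca Sa], (cos_sin_INR_sin_0 b) as [Cb Sb].
  replace ((INR a - INR b) * th) with (INR a * th - INR b * th) by ring.
  rewrite cos_minus, sin_minus, Ca, Sa, Cb, Sb, pow_add; split; ring.
Qed.

End SinZero.

Ltac INR_simpl := rewrite ?plus_INR, ?mult_INR; simpl; ring.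

Lemma rsum_cos_dirichlet N th :
  rsum (fun j => cos ((2 * INR j - INR N - 1) * th)) N = sinratio (INR N) th.
Proof.
  destruct (Req_dec (sin th) 0) as [H0 | H0].
  - rewrite sinratio_sin_0 by assumption.
    rewrite (rsum_ext _ (fun _ => cos th ^ (N + 1))), rsum_const.
    + replace (INR N * th) with ((INR N - INR 0) * th) by (simpl; ring).
      rewrite (proj1 (cos_sin_INR_diff_sin_0 th H0 _ _)), Nat.add_0_r, pow_add.
      unfold Rdiv; rewrite Rinv_cos_sin_0 by assumption; ring.
    + intros j Hj.
      replace (2 * INR j - INR N - 1) with (INR (2 * j) - INR (N + 1)) by INR_simpl.
      rewrite (proj1 (cos_sin_INR_diff_sin_0 th H0 _ _)).
      apply cos_pow_even_add_sin_0, H0.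
  - rewrite sinratio_sin_neq_0 by assumption.
    apply (Rmult_eq_reg_r (2 * sin th)); [| lra].
    rewrite <- Rmult_assoc, (Rmult_comm _ 2), <- rsum_scal.
    rewrite (rsum_ext _ (fun j => 2 * cos ((2 * INR j + (- INR N - 1)) * th)))
      by (intros; do 3 f_equal; ring).
    rewrite rsum_cos_arith.
    replace ((2 * INR N + (- INR N - 1) + 1) * th) with (INR N * th) by ring.
    replace ((- INR N - 1 + 1) * th) with (- (INR N * th)) by ring.
    rewrite sin_neg; field; assumption.
Qed.

Lemma rsum_sin_dirichlet N th : rsum (fun j => sin ((2 * INR j - INR N - 1) * th)) N = 0.
Proof.
  destruct (Req_dec (sin th) 0) as [H0 | H0].
  - rewrite (rsum_ext _ (fun _ => 0)), rsum_const; [ring |].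
    intros j Hj.
    replace (2 * INR j - INR N - 1) with (INR (2 * j) - INR (N + 1)) by INR_simpl.
    apply (proj2 (cos_sin_INR_diff_sin_0 th H0 _ _)).
  - apply (Rmult_eq_reg_r (2 * sin th)); [| lra].
    rewrite <- Rmult_assoc, (Rmult_comm _ 2), <- rsum_scal.
    rewrite (rsum_ext _ (fun j => 2 * sin ((2 * INR j + (- INR N - 1)) * th)))
      by (intros; do 3 f_equal; ring).
    rewrite rsum_sin_arith.
    replace ((2 * INR N + (- INR N - 1) + 1) * th) with (INR N * th) by ring.
    replace ((- INR N - 1 + 1) * th) with (- (INR N * th)) by ring.
    rewrite cos_neg; ring.
Qed.

Lemma rsum_cos_dirichlet_even N th :
  rsum (fun j => 2 * cos ((2 * INR j - 2 * INR N - 1) * th)) N = sinratio (2 * INR N) th.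
Proof.
  destruct (Req_dec (sin th) 0) as [H0 | H0].
  - rewrite sinratio_sin_0 by assumption.
    rewrite (rsum_ext _ (fun _ => 2 * cos th)), rsum_const.
    + replace (2 * INR N * th) with ((INR (2 * N) - INR 0) * th) by INR_simpl.
      rewrite (proj1 (cos_sin_INR_diff_sin_0 th H0 _ _)), Nat.add_0_r, cos_even_pow_sin_0
        by assumption.
      unfold Rdiv; rewrite Rinv_cos_sin_0 by assumption; ring.
    + intros j Hj.
      replace (2 * INR j - 2 * INR N - 1) with (INR (2 * j) - INR (2 * N + 1)) by INR_simpl.
      rewrite (proj1 (cos_sin_INR_diff_sin_0 th H0 _ _)).
      replace (2 * j + (2 * N + 1))%nat with (2 * (j + N) + 1)%nat by lia.
      rewrite cos_pow_even_add_sin_0 by assumption; ring.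
  - rewrite sinratio_sin_neq_0 by assumption.
    apply (Rmult_eq_reg_r (sin th)); [| assumption].
    rewrite (rsum_ext _ (fun j => 2 * cos ((2 * INR j + (- 2 * INR N - 1)) * th)))
      by (intros; do 3 f_equal; ring).
    rewrite rsum_cos_arith.
    replace ((2 * INR N + (- 2 * INR N - 1) + 1) * th) with 0 by ring.
    replace ((- 2 * INR N - 1 + 1) * th) with (- (2 * INR N * th)) by ring.
    rewrite sin_0, sin_neg; field; assumption.
Qed.

Lemma rsum_cos_dirichlet_odd N th :
  rsum (fun j => 2 * cos ((2 * INR j - 2 * INR N - 2) * th)) N = sinratio (2 * INR N + 1) th - 1.
Proof.
  destruct (Req_dec (sin th) 0) as [H0 | H0].
  - rewrite sinratio_sin_0 by assumption.
    rewrite (rsum_ext _ (fun _ => 2)), rsum_const.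
    + replace ((2 * INR N + 1) * th) with ((INR (2 * N + 1) - INR 0) * th) by INR_simpl.
      rewrite (proj1 (cos_sin_INR_diff_sin_0 th H0 _ _)), Nat.add_0_r.
      rewrite (cos_pow_even_add_sin_0 th H0 N 1), pow_1.
      field; apply cos_neq_0_sin_0, H0.
    + intros j Hj.
      replace (2 * INR j - 2 * INR N - 2) with (INR (2 * j) - INR (2 * N + 2)) by INR_simpl.
      rewrite (proj1 (cos_sin_INR_diff_sin_0 th H0 _ _)).
      replace (2 * j + (2 * N + 2))%nat with (2 * (j + N + 1))%nat by lia.
      rewrite cos_even_pow_sin_0 by assumption; ring.
  - rewrite sinratio_sin_neq_0 by assumption.
    apply (Rmult_eq_reg_r (sin th)); [| assumption].
    rewrite (rsum_ext _ (fun j => 2 * cos ((2 * INR j + (- 2 * INR N - 2)) * th)))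
      by (intros; do 3 f_equal; ring).
    rewrite rsum_cos_arith.
    replace ((2 * INR N + (- 2 * INR N - 2) + 1) * th) with (- th) by ring.
    replace ((- 2 * INR N - 2 + 1) * th) with (- ((2 * INR N + 1) * th)) by ring.
    rewrite !sin_neg; field; assumption.
Qed.

Lemma rsum_cos_dirichlet_odd_pred N th : (1 <= N)%nat ->
  rsum (fun j => if Nat.eqb j N then 1 else 2 * cos ((2 * INR j - 2 * INR N) * th)) N
  = sinratio (2 * INR N - 1) th.
Proof.
  intros HN; destruct N as [| M]; [lia |].
  rewrite rsum_S, Nat.eqb_refl.
  rewrite (rsum_ext _ (fun j => 2 * cos ((2 * INR j - 2 * INR M - 2) * th))).
  - rewrite rsum_cos_dirichlet_odd, S_INR.
    replace (2 * (INR M + 1) - 1) with (2 * INR M + 1) by ring; ring.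
  - intros j Hj; destruct (Nat.eqb_spec j (S M)); [lia |].
    rewrite S_INR; do 3 f_equal; ring.
Qed.

Definition kernel_angle RN N r j x := 2 * PI * (Jidx RN j * xi r x) - PI * calN RN N * xi r x.

Lemma e2pii_pair a : e2pii a = (cos (2 * PI * a), sin (2 * PI * a)).
Proof. unfold e2pii, Cexp; simpl; rewrite exp_0; apply injective_projections; simpl; ring. Qed.

Lemma Jidx_eq_0 RN j : (1 <= j)%nat ->
  Jidx RN j = 0 <-> (RN = B_N \/ RN = Bv_N \/ RN = D_N) /\ j = 1%nat.
Proof.
  intros Hj; assert (Hj1 : 1 <= INR j) by (apply (le_INR 1); lia).
  split.
  - destruct RN; simpl; intros H; try lra; (split; [tauto |]);
      apply INR_eq; simpl; lra.
  - intros [HRN ->]; destruct HRN as [-> | [-> | ->]]; simpl; ring.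
Qed.

Lemma m_lead_value RN N r j :
  m_lead RN N r j = RtoC (mcoef RN N j r * (if Req_EM_T (Jidx RN j) 0 then 2 else 1)).
Proof.
  unfold m_lead, theta2_lead; rewrite Rmult_0_r, cos_0, sin_0.
  destruct Req_EM_T; apply injective_projections; simpl; ring.
Qed.

Lemma cos_mul_opp a u : cos (a * - u) = cos (a * u).
Proof. rewrite <- cos_neg; f_equal; ring. Qed.
Lemma sin_mul_opp a u : sin (a * - u) = - sin (a * u).
Proof. rewrite <- sin_neg; f_equal; ring. Qed.

Ltac trig_pair :=
  rewrite ?e2pii_pair, ?cos_mul_opp, ?sin_mul_opp; unfold kernel_angle;
  rewrite ?Rmult_0_l, ?Rmult_0_r, ?Rminus_0_l, ?cos_0, ?sin_0, ?cos_neg, ?sin_neg,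
          ?cos_minus, ?sin_minus;
  unfold Cmult, Cminus, Cplus, Copp; apply injective_projections; simpl; ring.

Section LeadingTerms.

Variables (N : nat) (r x : R) (j : nat).
Hypothesis j_pos : (1 <= j)%nat.

Lemma M_lead_A :
  M_lead A_N N r j x = (cos (kernel_angle A_N N r j x), sin (kernel_angle A_N N r j x)).
Proof.
  unfold M_lead, combine, theta_lead, theta2_lead.
  destruct Req_EM_T as [HJ | _]; [apply Jidx_eq_0 in HJ; [| exact j_pos]; intuition discriminate |].
  trig_pair.
Qed.

Lemma M_lead_sin RN : RN = C_N \/ RN = Cv_N \/ RN = BC_N ->
  M_lead RN N r j x = (0, 2 * sin (kernel_angle RN N r j x)).
Proof.
  intros HRN; pose proof (Jidx_eq_0 RN j j_pos) as HJiff.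
  destruct HRN as [-> | [-> | ->]]; unfold M_lead, combine, theta_lead, theta2_lead;
    (destruct Req_EM_T as [HJ | _]; [apply HJiff in HJ; intuition discriminate | trig_pair]).
Qed.

Lemma M_lead_B RN : RN = B_N \/ RN = Bv_N ->
  M_lead RN N r j x = (- (if Nat.eqb j 1 then 4 else 2) * sin (kernel_angle RN N r j x), 0).
Proof.
  intros HRN; pose proof (Jidx_eq_0 RN j j_pos) as HJiff.
  destruct HRN as [-> | ->]; unfold M_lead, combine, theta_lead, theta1_lead;
    destruct Req_EM_T as [HJ | HJ].
  1, 3: destruct (proj1 HJiff HJ) as [_ ->]; unfold kernel_angle; rewrite HJ; trig_pair.
  all: destruct (Nat.eqb_spec j 1) as [Hj1 | _]; [exfalso; apply HJ, HJiff; tauto | trig_pair].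
Qed.

Lemma M_lead_D :
  M_lead D_N N r j x = ((if Nat.eqb j 1 then 4 else 2) * cos (kernel_angle D_N N r j x), 0).
Proof.
  unfold M_lead, combine, theta_lead, theta2_lead.
  destruct Req_EM_T as [HJ | HJ]; pose proof (Jidx_eq_0 D_N j j_pos) as HJiff.
  - destruct (proj1 HJiff HJ) as [_ ->]; unfold kernel_angle; rewrite HJ; trig_pair.
  - destruct (Nat.eqb_spec j 1) as [Hj1 | _]; [exfalso; apply HJ, HJiff; tauto |].
    trig_pair.
Qed.

End LeadingTerms.

Ltac split_J_cases HJiff :=
  destruct Req_EM_T as [HJ | HJ];
  [ try (exfalso; apply HJiff in HJ; destruct HJ as [HR HJ1];
         first [destruct HR as [HR | [HR | HR]]; discriminate | lia])
  | try (exfalso; apply HJ, HJiff; split; [tauto | reflexivity]) ].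

Lemma kernel_lead_sin RN N r x y j : 0 < r -> (1 <= j)%nat ->
  RN = B_N \/ RN = Bv_N \/ RN = C_N \/ RN = Cv_N \/ RN = BC_N ->
  kernel_lead RN N r x y j
  = RtoC (/ (2 * PI * r) * (4 * sin (kernel_angle RN N r j x) * sin (kernel_angle RN N r j y))).
Proof.
  intros Hr Hj HRN; pose proof PI_RGT_0 as Hpi.
  pose proof (Jidx_eq_0 RN j Hj) as HJiff.
  unfold kernel_lead; rewrite m_lead_value.
  destruct HRN as [-> | [-> | [-> | [-> | ->]]]];
    rewrite ?M_lead_B, ?M_lead_sin by (assumption || tauto); unfold mcoef;
    (destruct (Nat.eqb_spec j 1) as [-> | Hj1]; split_J_cases HJiff);
    unfold Cinv, Cmult, Cconj, RtoC; apply injective_projections; simpl; field; nra.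
Qed.

Lemma kernel_lead_A N r x y j : 0 < r -> (1 <= j)%nat ->
  kernel_lead A_N N r x y j
  = (/ (2 * PI * r) * cos (kernel_angle A_N N r j x - kernel_angle A_N N r j y),
     / (2 * PI * r) * sin (kernel_angle A_N N r j x - kernel_angle A_N N r j y)).
Proof.
  intros Hr Hj; pose proof PI_RGT_0 as Hpi.
  pose proof (Jidx_eq_0 A_N j Hj) as HJiff.
  unfold kernel_lead; rewrite m_lead_value, !M_lead_A by assumption; unfold mcoef.
  split_J_cases HJiff.
  rewrite cos_minus, sin_minus.
  unfold Cinv, Cmult, Cconj, RtoC; apply injective_projections; simpl; field; nra.
Qed.

Lemma kernel_lead_D N r x y j : 0 < r -> (2 <= N)%nat -> (1 <= j)%nat ->
  kernel_lead D_N N r x y j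
  = RtoC ((if Nat.eqb j N then / (4 * PI * r) else / (2 * PI * r))
          * (4 * cos (kernel_angle D_N N r j x) * cos (kernel_angle D_N N r j y))).
Proof.
  intros Hr HN Hj; pose proof PI_RGT_0 as Hpi.
  pose proof (Jidx_eq_0 D_N j Hj) as HJiff.
  unfold kernel_lead; rewrite m_lead_value, !M_lead_D by assumption; unfold mcoef.
  destruct (Nat.eqb_spec j 1) as [-> | Hj1].
  - replace (Nat.eqb 1 N) with false by (symmetry; apply Nat.eqb_neq; lia).
    split_J_cases HJiff.
    unfold Cinv, Cmult, Cconj, RtoC; apply injective_projections; simpl; field; nra.
  - split_J_cases HJiff.
    destruct (Nat.eqb j N);
      unfold Cinv, Cmult, Cconj, RtoC; apply injective_projections; simpl; field; nra.
Qed.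

Lemma Csum1_S f M : Csum1 (S M) f = Cplus (Csum1 M f) (f (S M)).
Proof.
  unfold Csum1; rewrite seq_S, map_app, fold_right_app; simpl.
  replace (1 + M)%nat with (S M) by lia.
  induction (map f (seq 1 M)) as [| a l IH]; simpl; [| rewrite IH]; ring.
Qed.

Lemma Csum1_pair N f g h : (forall j, (1 <= j <= N)%nat -> f j = (g j, h j)) ->
  Csum1 N f = (rsum g N, rsum h N).
Proof.
  induction N as [| N IH]; intros H; [reflexivity |].
  rewrite Csum1_S, !rsum_S, IH by (intros; apply H; lia).
  rewrite H by lia; reflexivity.
Qed.

Lemma Csum1_RtoC N f g : (forall j, (1 <= j <= N)%nat -> f j = RtoC (g j)) ->
  Csum1 N f = RtoC (rsum g N).
Proof.
  intros H; rewrite (Csum1_pair N f g (fun _ => 0)) by assumption.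
  rewrite rsum_const, Rmult_0_r; reflexivity.
Qed.

Lemma kernel_angle_minus RN N r j x y : 0 < r ->
  kernel_angle RN N r j x - kernel_angle RN N r j y
  = (2 * Jidx RN j - calN RN N) * ((x - y) / (2 * r)).
Proof. intros; unfold kernel_angle, xi; pose proof PI_RGT_0; field; split; lra. Qed.

Lemma kernel_angle_plus RN N r j x y : 0 < r ->
  kernel_angle RN N r j x + kernel_angle RN N r j y
  = (2 * Jidx RN j - calN RN N) * ((x + y) / (2 * r)).
Proof. intros; unfold kernel_angle, xi; pose proof PI_RGT_0; field; split; lra. Qed.

Lemma Csum1_kernel_lead_sin RN N r x y : 0 < r ->
  RN = B_N \/ RN = Bv_N \/ RN = C_N \/ RN = Cv_N \/ RN = BC_N ->
  Csum1 N (kernel_lead RN N r x y)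
  = RtoC (/ (2 * PI * r) *
      (rsum (fun j => 2 * cos ((2 * Jidx RN j - calN RN N) * ((x - y) / (2 * r)))) N
       - rsum (fun j => 2 * cos ((2 * Jidx RN j - calN RN N) * ((x + y) / (2 * r)))) N)).
Proof.
  intros Hr HRN.
  rewrite (Csum1_RtoC N _ (fun j => / (2 * PI * r)
    * (4 * sin (kernel_angle RN N r j x) * sin (kernel_angle RN N r j y)))).
  - rewrite <- rsum_minus, <- rsum_scal; f_equal; apply rsum_ext; intros j _.
    rewrite <- kernel_angle_minus, <- kernel_angle_plus, cos_minus, cos_plus by assumption; ring.
  - intros j Hj; apply kernel_lead_sin; [assumption | lia | assumption].
Qed.

Lemma Klimit_B RN N r x y : 0 < r -> RN = B_N \/ RN = Cv_N \/ RN = BC_N ->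
  Csum1 N (kernel_lead RN N r x y) = RtoC (Klimit RN N r x y).
Proof.
  intros Hr HRN; rewrite Csum1_kernel_lead_sin by tauto.
  assert (Hc : forall j, 2 * Jidx RN j - calN RN N = 2 * INR j - 2 * INR N - 1)
    by (intros; destruct HRN as [-> | [-> | ->]]; simpl; field).
  rewrite !(rsum_ext (fun j => 2 * cos ((2 * Jidx RN j - calN RN N) * _))
                     (fun j => 2 * cos ((2 * INR j - 2 * INR N - 1) * _)))
    by (intros; rewrite Hc; reflexivity).
  rewrite !rsum_cos_dirichlet_even; destruct HRN as [-> | [-> | ->]]; reflexivity.
Qed.

Lemma Klimit_C RN N r x y : 0 < r -> RN = C_N \/ RN = Bv_N ->
  Csum1 N (kernel_lead RN N r x y) = RtoC (Klimit RN N r x y).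
Proof.
  intros Hr HRN; rewrite Csum1_kernel_lead_sin by tauto.
  assert (Hc : forall j, 2 * Jidx RN j - calN RN N = 2 * INR j - 2 * INR N - 2)
    by (intros; destruct HRN as [-> | ->]; simpl; ring).
  rewrite !(rsum_ext (fun j => 2 * cos ((2 * Jidx RN j - calN RN N) * _))
                     (fun j => 2 * cos ((2 * INR j - 2 * INR N - 2) * _)))
    by (intros; rewrite Hc; reflexivity).
  rewrite !rsum_cos_dirichlet_odd; f_equal.
  destruct HRN as [-> | ->]; unfold Klimit, KC; ring.
Qed.

Lemma kernel_angle_D_last N r x : kernel_angle D_N N r N x = 0.
Proof. unfold kernel_angle; simpl; ring. Qed.

Lemma Klimit_D N r x y : 0 < r -> (2 <= N)%nat ->
  Csum1 N (kernel_lead D_N N r x y) = RtoC (Klimit D_N N r x y).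
Proof.
  intros Hr HN; pose proof PI_RGT_0.
  set (h th j := if Nat.eqb j N then 1 else 2 * cos ((2 * INR j - 2 * INR N) * th)).
  rewrite (Csum1_RtoC N _
    (fun j => / (2 * PI * r) * (h ((x - y) / (2 * r)) j + h ((x + y) / (2 * r)) j))).
  - rewrite rsum_scal, rsum_plus; unfold h; rewrite !rsum_cos_dirichlet_odd_pred by lia.
    reflexivity.
  - intros j Hj; rewrite kernel_lead_D by (assumption || lia); f_equal; unfold h.
    destruct (Nat.eqb_spec j N) as [-> | _].
    + rewrite !kernel_angle_D_last, cos_0; field; lra.
    + replace (2 * INR j - 2 * INR N) with (2 * Jidx D_N j - calN D_N N) by (simpl; ring).
      rewrite <- kernel_angle_minus, <- kernel_angle_plus, cos_minus, cos_plus by assumption; ring.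
Qed.

Lemma Klimit_A N r x y : 0 < r ->
  Csum1 N (kernel_lead A_N N r x y) = RtoC (Klimit A_N N r x y).
Proof.
  intros Hr.
  set (th := (x - y) / (2 * r)).
  rewrite (Csum1_pair N _ (fun j => / (2 * PI * r) * cos ((2 * INR j - INR N - 1) * th))
                         (fun j => / (2 * PI * r) * sin ((2 * INR j - INR N - 1) * th))).
  - rewrite !rsum_scal, rsum_cos_dirichlet, rsum_sin_dirichlet, Rmult_0_r; reflexivity.
  - intros j Hj; rewrite kernel_lead_A, kernel_angle_minus by (assumption || lia).
    replace (2 * Jidx A_N j - calN A_N N) with (2 * INR j - INR N - 1) by (simpl; field).
    reflexivity.
Qed.

Lemma Klimit_kernel_lead RN N r x y : 0 < r -> admissible RN N ->
  Csum1 N (kernel_lead RN N r x y) = RtoC (Klimit RN N r x y).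
Proof.
  intros Hr [HN HD]; destruct RN.
  - apply Klimit_A; assumption.
  - apply Klimit_B; tauto.
  - apply Klimit_C; tauto.
  - apply Klimit_C; tauto.
  - apply Klimit_B; tauto.
  - apply Klimit_B; tauto.
  - apply Klimit_D; [assumption | apply HD; reflexivity].
Qed.

Theorem corollary3p4 (RN : RootSys) (N : nat) (r : R) :
  0 < r -> (1 <= N)%nat -> (RN = D_N -> (2 <= N)%nat) ->
  forall x y : R, in_dom RN r x -> in_dom RN r y ->
  filterlim (fun ts : R => Kt RN N r ts (ts / 2) x y)
            (Rbar_locally p_infty)
            (locally (RtoC (Klimit RN N r x y))).
Proof.
  (* the limit holds for all x, y, not only on the state space *)
  intros Hr HN HD x y _ _.
  rewrite <- Klimit_kernel_lead by (assumption || split; assumption).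
  apply is_Clim_Kt_half; [assumption | split; assumption].
Qed.
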